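(* Given $t,\Delta\in\mathbb{N}$ with $t\ge\Delta$ and $\Delta$-sparse sets $A_1,A_2\subseteq[t]$, one can compute in time $O(T_{\mathrm{MinConv}}(t/\Delta))$ a set $A$ that $(\infty,\Delta)$-approximates $A_1+A_2$.
   Context: $\mathbb{N}=\{0,1,2,\dots\}$, $[t]=\{0,\dots,t\}$, $A+B=\{a+b:a\in A,b\in B\}$. $T_{\mathrm{MinConv}}(n)$ is the running time of an algorithm for \textsc{MinConv} on length-$n$ sequences (given $A,B$ of length $n$ with entries in $\{1,\dots,M\}$, compute $C[k]=\min_{i+j=k}(A[i]+B[j])$), with $T_{\mathrm{MinConv}}(n)=\Omega(n)$ and $T_{\mathrm{MinConv}}(O(n))=O(T_{\mathrm{MinConv}}(n))$. A set is $\Delta$-sparse if it contains at most $2$ elements in every interval $[x,x+\Delta]$, $x\in\mathbb{N}$. For $A\subseteq[t]$ (with $t\in\mathbb{N}\cup\{\infty\}$, where $[\infty]=\mathbb{N}$ and $\infty+1=\infty$) and $b\in\mathbb{N}$: $\mathrm{apx}^-_t(b,A)=\max\{a\in A\cup\{t+1\}:a\le b\}$, $\mathrm{apx}^+_t(b,A)=\min\{a\in A\cup\{t+1\}:a\ge b\}$ ($\max\emptyset=-\infty$, $\min\emptyset=\infty$). $A$ $(t,\Delta)$-approximates $B$ if $A\subseteq B\subseteq[t]$ and $\mathrm{apx}^+_t(b,A)-\mathrm{apx}^-_t(b,A)\le\Delta$ for all $b\in B$. *)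

From mathcomp Require Import all_boot.
Set Implicit Arguments. Unset Strict Implicit. Unset Printing Implicit Defensive.

(* Finite sets of naturals are represented by strictly increasing lists
   (for inputs) or arbitrary lists (for the output set, read as a set). *)

Definition sparse (D : nat) (A : seq nat) : Prop :=
  forall x : nat, count (fun a => (x <= a) && (a <= x + D)) A <= 2.

Definition sumset (A1 A2 : seq nat) : nat -> Prop :=
  fun b => exists2 a1, a1 \in A1 & exists2 a2, a2 \in A2 & b = a1 + a2.

(* t : option nat, with None standing for infinity; [t] = {0..t}, [oo] = N. *)
Definition in_range (t : option nat) (b : nat) : bool :=
  if t is Some t' then b <= t' else true.

(* the extra candidate t+1 (absent when t = oo, since oo+1 = oo is no nat) *)
Definition extra (t : option nat) : seq nat :=
  if t is Some t' then [:: t'.+1] else [::].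

(* apx^-_t(b, A) ; None encodes -oo (max of the empty set) *)
Definition apx_minus (t : option nat) (b : nat) (A : seq nat) : option nat :=
  match [seq a <- A ++ extra t | a <= b] with
  | [::] => None
  | c :: cs => Some (foldr maxn c cs)
  end.

(* apx^+_t(b, A) ; None encodes +oo (min of the empty set; when t = oo the
   candidate t+1 = oo is also +oo) *)
Definition apx_plus (t : option nat) (b : nat) (A : seq nat) : option nat :=
  match [seq a <- A ++ extra t | b <= a] with
  | [::] => None
  | c :: cs => Some (foldr minn c cs)
  end.

(* apx^+ - apx^- <= Delta, where any infinite value makes the difference
   infinite (+oo - x = +oo, x - (-oo) = +oo). *)
Definition gap_le (D : nat) (hi lo : option nat) : Prop :=
  match hi, lo with
  | Some h, Some l => h - l <= D
  | _, _ => False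
  end.

Definition approximates (t : option nat) (D : nat) (A : seq nat)
    (B : nat -> Prop) : Prop :=
  [/\ (forall a, a \in A -> B a),
      (forall b, B b -> in_range t b) &
      (forall b, B b -> gap_le D (apx_plus t b A) (apx_minus t b A))].

Inductive instr : Type :=
| IConst (r n : nat)
| IAdd (r a b : nat)
| ISub (r a b : nat)          (* R[r] := R[a] - R[b] (truncated) *)
| IMul (r a b : nat)
| IDiv (r a b : nat)          (* R[r] := R[a] / R[b] (floor; x/0 = 0) *)
| ILt (r a b : nat)
| ILoad (r a : nat)
| IStore (a b : nat)
| IJz (r l : nat)
| IJmp (l : nat)
| IMinConv (a b n c : nat)    (* oracle: with n := R[n], for k < 2n-1,
                                 M[R[c]+k] := min_{i+j=k, i,j<n}
                                   (M[R[a]+i] + M[R[b]+j]) *)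
| IHalt.

Record state := St { pc : nat; regs : nat -> nat; mem : nat -> nat }.

Definition upd (f : nat -> nat) (k v : nat) : nat -> nat :=
  fun x => if x == k then v else f x.

Definition minconv_at (M : nat -> nat) (a b n k : nat) : nat :=
  let f i := M (a + i) + M (b + (k - i)) in
  let lo := k - n.-1 in
  let hi := minn k n.-1 in
  foldr minn (f lo) (map f (iota lo (hi - lo).+1)).

Definition minconv_mem (M : nat -> nat) (a b n c : nat) : nat -> nat :=
  fun x => if (c <= x) && (x < c + (2 * n).-1)
           then minconv_at M a b n (x - c) else M x.

Definition step (T : nat -> nat) (P : seq instr) (s : state)
    : option (state * nat) :=
  let: St p R M := s in
  match nth IHalt P p with
  | IConst r n => Some (St p.+1 (upd R r n) M, 1)
  | IAdd r a b => Some (St p.+1 (upd R r (R a + R b)) M, 1)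
  | ISub r a b => Some (St p.+1 (upd R r (R a - R b)) M, 1)
  | IMul r a b => Some (St p.+1 (upd R r (R a * R b)) M, 1)
  | IDiv r a b => Some (St p.+1 (upd R r (R a %/ R b)) M, 1)
  | ILt r a b => Some (St p.+1 (upd R r (R a < R b)) M, 1)
  | ILoad r a => Some (St p.+1 (upd R r (M (R a))) M, 1)
  | IStore a b => Some (St p.+1 R (upd M (R a) (R b)), 1)
  | IJz r l => Some (St (if R r == 0 then l else p.+1) R M, 1)
  | IJmp l => Some (St l R M, 1)
  | IMinConv a b n c =>
      Some (St p.+1 R (minconv_mem M (R a) (R b) (R n) (R c)), T (R n))
  | IHalt => None
  end.

Definition bounded (W : nat) (s : state) : Prop :=
  (forall x, regs s x <= W) /\ (forall x, mem s x <= W).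

Inductive exec (W : nat) (T : nat -> nat) (P : seq instr)
    : state -> nat -> state -> Prop :=
| exec_halt s : bounded W s -> step T P s = None -> exec W T P s 0 s
| exec_step s s1 c k s2 : bounded W s -> step T P s = Some (s1, c) ->
    exec W T P s1 k s2 -> exec W T P s (c + k) s2.

(* input encoding: M[0] = t, M[1] = Delta, M[2] = |A1|, M[3] = |A2|,
   then the elements of A1 (increasing), then those of A2 (increasing). *)
Definition init_state (t D : nat) (A1 A2 : seq nat) : state :=
  St 0 (fun _ => 0)
     (fun x => nth 0 ([:: t; D; size A1; size A2] ++ A1 ++ A2) x).

Definition output (s : state) : seq nat :=
  mkseq (fun i => mem s i.+1) (mem s 0).

From mathcomp Require Import all_boot zify.
From Stdlib Require Import FunctionalExtensionality.
Set Implicit Arguments. Unset Strict Implicit. Unset Printing Implicit Defensive.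

(* Cut [0, t] into buckets of width h = D/2 + 1; there are O(t/D) of them.
   For a bucket index k, the min-plus convolution of the bucket minima of A1
   and A2 is the smallest sum a1 + a2 whose bucket indices add up to k, and
   2t minus the convolution of the bucket minima of t - a is the largest such
   sum.  Every b = a1 + a2 in A1 + A2 lies between the two sums of its own k,
   and both lie in [k h, (k + 2) h - 2], so they are at most 2 h - 2 <= D
   apart.  By sparsity |A1| + |A2| = O(t/D), so filling the bucket tables,
   two oracle calls of length 4 (t/D) and writing two candidates per k cost
   O(T(t/D)). *)

Section ProgramLogic.
Variables (W : nat) (T : nat -> nat) (P : seq instr).

Inductive runs : state -> nat -> state -> Prop :=
| runs0 s : runs s 0 s
| runsS s s1 c k s2 : bounded W s -> step T P s = Some (s1, c) ->
    runs s1 k s2 -> runs s (c + k) s2.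

Lemma runs_trans s c1 s1 c2 s2 :
  runs s c1 s1 -> runs s1 c2 s2 -> runs s (c1 + c2) s2.
Proof.
elim=> [//|s0 s1' c k s2' Hb Hs _ IH] H2.
by rewrite -addnA; apply: runsS Hb Hs _; exact: IH.
Qed.

Lemma exec_of_runs s c s' :
  runs s c s' -> bounded W s' -> step T P s' = None -> exec W T P s c s'.
Proof.
elim=> [s0|s0 s1 c0 k s2 Hb Hs _ IH] Hb' Hn'; first exact: exec_halt.
by apply: exec_step Hb Hs _; exact: IH.
Qed.

Definition reaches s (Q : nat -> state -> Prop) :=
  exists c s', runs s c s' /\ Q c s'.

Lemma reaches_now s (Q : nat -> state -> Prop) : Q 0 s -> reaches s Q.
Proof. by move=> H; exists 0, s; split=> //; constructor. Qed.

Lemma reaches_step s s1 c (Q : nat -> state -> Prop) :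
  bounded W s -> step T P s = Some (s1, c) ->
  reaches s1 (fun k s' => Q (c + k) s') -> reaches s Q.
Proof. by move=> Hb Hs [k [s' [Hr HQ]]]; exists (c + k), s'; split=> //; exact: runsS Hr. Qed.

Lemma reaches_bind s (Q1 Q : nat -> state -> Prop) : reaches s Q1 ->
  (forall c s1, Q1 c s1 -> reaches s1 (fun k s' => Q (c + k) s')) -> reaches s Q.
Proof.
move=> [c [s1 [Hr HQ]]] /(_ _ _ HQ) [k [s' [Hr' HQ']]].
by exists (c + k), s'; split=> //; exact: runs_trans Hr Hr'.
Qed.

Lemma reaches_weaken s (Q1 Q : nat -> state -> Prop) : reaches s Q1 ->
  (forall c s', Q1 c s' -> Q c s') -> reaches s Q.
Proof. by move=> [c [s' [Hr HQ]]] H; exists c, s'; split=> //; exact: H. Qed.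

Lemma reaches_iter (I : nat -> state -> Prop) n b :
  (forall j s, j < n -> I j s -> reaches s (fun c s' => c <= b /\ I j.+1 s')) ->
  forall j s, j <= n -> I j s -> reaches s (fun c s' => c <= b * (n - j) /\ I n s').
Proof.
move=> body j s; move Hm: (n - j) => m; elim: m j s Hm => [|m IH] j s Hm Hj HI.
  by apply: reaches_now; rewrite muln0 (_ : n = j) //; lia.
apply: reaches_bind (body j s _ HI) _ => [|c s1 [Hc H1]]; first lia.
apply: reaches_weaken (IH j.+1 s1 _ _ H1) _ => [||c' s' [Hc' H']]; [lia | lia |].
by split=> //; rewrite mulnS; lia.
Qed.

End ProgramLogic.

Definition regfile (L : seq nat) (y : nat) : nat := nth 0 L y.
Arguments regfile L y /.

Lemma upd_regfile L r v : upd (regfile L) r v = regfile (set_nth 0 L r v).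
Proof.
by apply: functional_extensionality => y; rewrite /upd /= nth_set_nth /=; case: eqP.
Qed.

Lemma regfile_nseq0 n : regfile (nseq n 0) = fun _ => 0.
Proof. by apply: functional_extensionality => y /=; rewrite nth_nseq if_same. Qed.

Definition regs_bounded W L := all (fun x => x <= W) L.
Definition mem_bounded W (M : nat -> nat) := forall x, M x <= W.

Lemma regs_bounded_set W L r v :
  regs_bounded W L -> v <= W -> regs_bounded W (set_nth 0 L r v).
Proof.
move=> /allP HL Hv; apply/allP => x /(nthP 0) [i]; rewrite size_set_nth nth_set_nth /=.
case: eqP => [_ _ <- //|_ Hi <-]; case: (ltnP i (size L)) => Hi'.
- by apply: HL; exact: mem_nth.
- by rewrite nth_default.
Qed.

Lemma bounded_regfile W p L M :
  regs_bounded W L -> mem_bounded W M -> bounded W (St p (regfile L) M).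
Proof.
move=> /allP HL HM; split=> x //=.
by case: (ltnP x (size L)) => Hx; [apply: HL; exact: mem_nth | rewrite nth_default].
Qed.

Lemma regfile_le W L x : regs_bounded W L -> regfile L x <= W.
Proof. by move=> HL; have [/= H _] := bounded_regfile 0 HL (fun x => leq0n W); apply: H. Qed.

Lemma mem_bounded_upd W M a v : mem_bounded W M -> v <= W -> mem_bounded W (upd M a v).
Proof. by move=> HM Hv x; rewrite /upd; case: eqP. Qed.

Lemma upd_neq (f : nat -> nat) k v x : x != k -> upd f k v x = f x.
Proof. by rewrite /upd => /negbTE ->. Qed.

Lemma foldr_minn_le x s y : y \in x :: s -> foldr minn x s <= y.
Proof.
elim: s => [|e s IH]; first by rewrite inE => /eqP->.
rewrite /= !inE geq_min => /or3P [/eqP Ey|/eqP ->|Hy].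
- by rewrite IH ?orbT // inE Ey eqxx.
- by rewrite leqnn.
- by rewrite IH ?orbT // inE Hy orbT.
Qed.
Lemma foldr_minn_in x s : foldr minn x s \in x :: s.
Proof.
elim: s => [|e s IH] /=; first by rewrite inE.
rewrite /minn; case: ifP => _; first by rewrite !inE eqxx orbT.
by move: IH; rewrite !inE => /orP [->|->]; rewrite ?orbT.
Qed.

Lemma foldr_maxn_ge x s y : y \in x :: s -> y <= foldr maxn x s.
Proof.
elim: s => [|e s IH]; first by rewrite inE => /eqP->.
rewrite /= !inE leq_max => /or3P [/eqP Ey|/eqP ->|Hy].
- by rewrite IH ?orbT // inE Ey eqxx.
- by rewrite leqnn.
- by rewrite IH ?orbT // inE Hy orbT.
Qed.

Definition is_minconv (f g c : nat -> nat) (n : nat) : Prop :=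
  forall k, k < (2 * n).-1 ->
    (forall i j, i < n -> j < n -> i + j = k -> c k <= f i + g j) /\
    exists i j, [/\ i < n, j < n, i + j = k & c k = f i + g j].

Lemma eq_is_minconv f g c f' g' c' n :
  (forall i, i < n -> f i = f' i) -> (forall j, j < n -> g j = g' j) ->
  (forall k, k < (2 * n).-1 -> c k = c' k) ->
  is_minconv f g c n -> is_minconv f' g' c' n.
Proof.
move=> Ef Eg Ec H k Hk; have [Hle [i [j [Hi Hj Hij Hc]]]] := H k Hk.
rewrite -Ec //; split=> [i' j' Hi' Hj' Hij'|].
- by rewrite -Ef // -Eg //; exact: Hle.
- by exists i, j; rewrite -Ef // -Eg.
Qed.

Lemma minconv_at_correct M a b n :
  is_minconv (fun i => M (a + i)) (fun j => M (b + j)) (minconv_at M a b n) n.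
Proof.
move=> k Hk; rewrite /minconv_at.
set f := fun i => M (a + i) + M (b + (k - i)); split.
- move=> i j Hi Hj Hij.
  have -> : M (a + i) + M (b + j) = f i by rewrite /f -Hij addKn.
  apply: foldr_minn_le; rewrite inE; apply/orP; right.
  by apply/mapP; exists i => //; rewrite mem_iota; lia.
- have := foldr_minn_in (f (k - n.-1)) (map f (iota (k - n.-1) ((minn k n.-1 - (k - n.-1)).+1))).
  rewrite inE => /orP [/eqP ->|/mapP [i Hi ->]].
  + by exists (k - n.-1), (k - (k - n.-1)); split=> //; lia.
  + by move: Hi; rewrite mem_iota => Hi; exists i, (k - i); split=> //; lia.
Qed.

Lemma minconv_mem_in M a b n c x : c <= x -> x < c + (2 * n).-1 ->
  minconv_mem M a b n c x = minconv_at M a b n (x - c).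
Proof. by move=> H1 H2; rewrite /minconv_mem H1 H2. Qed.

Lemma minconv_mem_out M a b n c x : x < c -> minconv_mem M a b n c x = M x.
Proof. by move=> H; rewrite /minconv_mem (_ : (c <= x) = false) //; lia. Qed.

Lemma minconv_mem_bounded W M a b n c : mem_bounded W M ->
  (forall i j, i < n -> j < n -> M (a + i) + M (b + j) <= W) ->
  mem_bounded W (minconv_mem M a b n c).
Proof.
move=> HM Hab x; rewrite /minconv_mem; case: ifP => // /andP [H1 H2].
have [_ [i [j [Hi Hj _ ->]]]] := @minconv_at_correct M a b n (x - c) ltac:(lia).
exact: Hab.
Qed.

Section Buckets.
Variables (h top : nat) (f : nat -> nat).

(* [top] stands for the minimum of an empty bucket. *)
Definition bucket_min (S : seq nat) (i : nat) : nat :=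
  foldr (fun a m => if a %/ h == i then minn (f a) m else m) top S.

Lemma bucket_min_rcons S a i :
  bucket_min (rcons S a) i = if a %/ h == i then minn (bucket_min S i) (f a) else bucket_min S i.
Proof.
elim: S => [|e S IH] /=; first by case: ifP => //; rewrite minnC.
by rewrite IH; case: ifP => He; case: ifP => Ha //; rewrite minnA.
Qed.

Lemma bucket_min_le_top S i : bucket_min S i <= top.
Proof. elim: S => //= a S IH; case: ifP => // _; exact: leq_trans (geq_minr _ _) IH. Qed.

Lemma bucket_min_le S i a : a \in S -> a %/ h = i -> bucket_min S i <= f a.
Proof.
elim: S => [|e S IH] //=; rewrite inE => /orP [/eqP <- ->|Ha Hi]; first by rewrite eqxx geq_minl.
by case: ifP => _; [apply: leq_trans (geq_minr _ _) _|]; exact: IH.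
Qed.

Lemma bucket_min_attained S i :
  bucket_min S i < top -> exists2 a, a \in S & a %/ h = i /\ bucket_min S i = f a.
Proof.
elim: S => [|a S IH] /=; first by rewrite ltnn.
case: ifP => [/eqP Ha|_ /IH [b H1 H2]]; last by exists b => //; rewrite inE H1 orbT.
rewrite /minn; case: ifP => _ H; first by exists a; rewrite ?inE ?eqxx.
by have [b H1 H2] := IH H; exists b => //; rewrite inE H1 orbT.
Qed.

Lemma minconv_bucket_witness S1 S2 c n k :
  is_minconv (bucket_min S1) (bucket_min S2) c n -> k < (2 * n).-1 -> c k < top ->
  exists a1 a2, [/\ a1 \in S1, a2 \in S2, a1 %/ h + a2 %/ h = k & c k = f a1 + f a2].
Proof.
move=> Hc Hk Hlt; have [_ [i [j [_ _ Hij Ec]]]] := Hc k Hk; subst k.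
have Hb1 := bucket_min_le_top S1 i; have Hb2 := bucket_min_le_top S2 j.
have [a1 m1 [d1 e1]] := @bucket_min_attained S1 i ltac:(lia).
have [a2 m2 [d2 e2]] := @bucket_min_attained S2 j ltac:(lia).
by exists a1, a2; split=> //; rewrite ?d1 ?d2 // Ec e1 e2.
Qed.

End Buckets.

Lemma bucket_sum_bounds h a1 a2 : 0 < h ->
  (a1 %/ h + a2 %/ h) * h <= a1 + a2 /\ a1 + a2 + 2 <= (a1 %/ h + a2 %/ h).+2 * h.
Proof.
move=> Hh; have u1 := ltn_ceil a1 Hh; have u2 := ltn_ceil a2 Hh.
have g1 := leq_divM a1 h; have g2 := leq_divM a2 h.
move: (a1 %/ h) (a2 %/ h) u1 u2 g1 g2 => i j; rewrite !mulSn !mulnDl; lia.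
Qed.

Lemma apx_plus_le b A y : y \in A -> b <= y ->
  exists2 z, apx_plus None b A = Some z & z <= y.
Proof.
rewrite /apx_plus /= cats0 => Hy Hb.
have : y \in [seq a <- A | b <= a] by rewrite mem_filter Hb Hy.
case: [seq a <- A | b <= a] => [//|c cs] Hin.
by exists (foldr minn c cs) => //; exact: foldr_minn_le.
Qed.

Lemma apx_minus_ge b A y : y \in A -> y <= b ->
  exists2 z, apx_minus None b A = Some z & y <= z.
Proof.
rewrite /apx_minus /= cats0 => Hy Hb.
have : y \in [seq a <- A | a <= b] by rewrite mem_filter Hb Hy.
case: [seq a <- A | a <= b] => [//|c cs] Hin.
by exists (foldr maxn c cs) => //; exact: foldr_maxn_ge.
Qed.

Section Approximation.
Variables (t D n h : nat) (A1 A2 : seq nat) (lo hi : nat -> nat).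
Local Notation top := (t + t + 2).
Local Notation K := ((2 * n).-1).
Hypotheses (h_gt0 : 0 < h) (h2_le : h + h <= D + 2).
Hypotheses (A1_le : all (fun a => a <= t) A1) (A2_le : all (fun a => a <= t) A2)
  (bucket_lt : forall a, a <= t -> a %/ h < n).
Hypothesis lo_conv :
  is_minconv (bucket_min h top id A1) (bucket_min h top id A2) lo n.
Hypothesis hi_conv :
  is_minconv (bucket_min h top (fun a => t - a) A1) (bucket_min h top (fun a => t - a) A2) hi n.

(* Bucket sum k is nonempty iff [lo k < top]; then it contributes the
   smallest sum [lo k] and the largest sum [t + t - hi k]. *)
Definition out_pair k := if lo k < top then [:: lo k; t + t - hi k] else [::].
Definition out_seq m := flatten [seq out_pair k | k <- iota 0 m].

Lemma lo_le_sum a1 a2 : a1 \in A1 -> a2 \in A2 -> lo (a1 %/ h + a2 %/ h) <= a1 + a2.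
Proof.
move=> m1 m2; have b1 := allP A1_le _ m1; have b2 := allP A2_le _ m2.
have [|Hle _] := lo_conv (k := a1 %/ h + a2 %/ h).
  by have := bucket_lt b1; have := bucket_lt b2; lia.
have := Hle _ _ (bucket_lt b1) (bucket_lt b2) erefl.
have := @bucket_min_le h top id _ _ _ m1 erefl.
have := @bucket_min_le h top id _ _ _ m2 erefl; rewrite /=; lia.
Qed.

Lemma hi_le_sum a1 a2 : a1 \in A1 -> a2 \in A2 ->
  hi (a1 %/ h + a2 %/ h) <= (t - a1) + (t - a2).
Proof.
move=> m1 m2; have b1 := allP A1_le _ m1; have b2 := allP A2_le _ m2.
have [|Hle _] := hi_conv (k := a1 %/ h + a2 %/ h).
  by have := bucket_lt b1; have := bucket_lt b2; lia.
have := Hle _ _ (bucket_lt b1) (bucket_lt b2) erefl.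
have := @bucket_min_le h top (fun a => t - a) _ _ _ m1 erefl.
have := @bucket_min_le h top (fun a => t - a) _ _ _ m2 erefl; lia.
Qed.

Lemma lo_witness k : k < K -> lo k < top ->
  exists a1 a2, [/\ a1 \in A1, a2 \in A2, a1 %/ h + a2 %/ h = k & lo k = a1 + a2].
Proof. exact: minconv_bucket_witness. Qed.

Lemma hi_witness k : k < K -> lo k < top ->
  exists a1 a2, [/\ a1 \in A1, a2 \in A2, a1 %/ h + a2 %/ h = k & t + t - hi k = a1 + a2].
Proof.
move=> Hk Hlo; have [a1 [a2 [m1 m2 Hs _]]] := lo_witness Hk Hlo.
have Hhi : hi k < top by rewrite -Hs; have := hi_le_sum m1 m2; lia.
have [c1 [c2 [n1 n2 Hc ->]]] := minconv_bucket_witness hi_conv Hk Hhi.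
have := allP A1_le _ n1; have := allP A2_le _ n2.
by exists c1, c2; split=> //; lia.
Qed.

Lemma mem_out_seq k y : k < K -> y \in out_pair k -> y \in out_seq K.
Proof.
by move=> Hk Hy; apply/flattenP; exists (out_pair k) => //; apply: map_f; rewrite mem_iota.
Qed.

Lemma out_seq_sub y : y \in out_seq K -> sumset A1 A2 y.
Proof.
move/flattenP=> [s /mapP [k]]; rewrite mem_iota /= => Hk ->.
rewrite /out_pair; case: ifP => Hc //; rewrite !inE => /orP [] /eqP ->.
- by have [a1 [a2 [m1 m2 _ ->]]] := lo_witness Hk Hc; exists a1 => //; exists a2.
- by have [a1 [a2 [m1 m2 _ ->]]] := hi_witness Hk Hc; exists a1 => //; exists a2.
Qed.

Lemma out_seq_approximates : approximates None D (out_seq K) (sumset A1 A2).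
Proof.
split=> [|//|b [a1 m1 [a2 m2 ->]]]; first exact: out_seq_sub.
have b1 := allP A1_le _ m1; have b2 := allP A2_le _ m2.
set k := a1 %/ h + a2 %/ h.
have Hk : k < K by have := bucket_lt b1; have := bucket_lt b2; lia.
have lo_le : lo k <= a1 + a2 := lo_le_sum m1 m2.
have Hlo : lo k < top by lia.
have hi_ge : a1 + a2 <= t + t - hi k by have := hi_le_sum m1 m2; rewrite -/k; lia.
have [e1 [e2 [_ _ He Elo]]] := lo_witness Hk Hlo.
have [c1 [c2 [_ _ Hc Ehi]]] := hi_witness Hk Hlo.
have [Be _] := bucket_sum_bounds e1 e2 h_gt0; have [_ Bc] := bucket_sum_bounds c1 c2 h_gt0.
have In_lo : lo k \in out_seq K by apply: (mem_out_seq Hk); rewrite /out_pair Hlo inE eqxx.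
have In_hi : t + t - hi k \in out_seq K.
  by apply: (mem_out_seq Hk); rewrite /out_pair Hlo !inE eqxx orbT.
have [z -> z_le] := apx_plus_le In_hi hi_ge.
have [z' -> z'_ge] := apx_minus_ge In_lo lo_le.
rewrite He in Be; rewrite Hc !mulSn in Bc; rewrite /gap_le.
by clear -z_le z'_ge Be Bc Elo Ehi h2_le; lia.
Qed.

End Approximation.

Definition mem_table (M : nat -> nat) (base : nat) (g : nat -> nat) (n : nat) :=
  forall i, i < n -> M (base + i) = g i.

Lemma mem_table_upd_out M base g n x v :
  mem_table M base g n -> x < base \/ base + n <= x -> mem_table (upd M x v) base g n.
Proof. by move=> H Hx i Hi; rewrite upd_neq ?H //; apply/eqP; lia. Qed.

Lemma mem_table_upd_bucket h top f M base n S a i :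
  mem_table M base (bucket_min h top f S) n -> a %/ h = i ->
  mem_table (upd M (base + i) (M (base + i) - (M (base + i) - f a))) base
            (bucket_min h top f (rcons S a)) n.
Proof.
move=> H Ha j Hj; rewrite bucket_min_rcons Ha /upd eqn_add2l -minnE.
by case: (eqVneq j i) Hj => [->|_] /H ->.
Qed.

(* Registers: 1 t, 2 D, 3 |A1|, 4 |A2|, 5 q = t/D, 6 nb = 4q (number of
   buckets), 7 h = D/2 + 1, 8 top = 2t + 2, 9 B = 4 + |A1| + |A2|, 14 4 + |A1|,
   16 the constant 1, 23 2t, 24 2nb; 10 and 15 are loop counter and bound, 22
   the output size, the others scratch.  Memory from B on holds four tables of
   nb bucket minima (of a in A1, a in A2, t - a in A1, t - a in A2) and then
   the two convolutions of length 2nb - 1 at B + 4nb and B + 6nb.  Addresses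
   of jump targets are marked. *)
Definition approx_prog : seq instr := [::
         IConst 16 1; ILoad 1 0; ILoad 2 16; IConst 11 2; ILoad 3 11;
         IConst 11 3; ILoad 4 11; IDiv 5 1 2; IAdd 6 5 5; IAdd 6 6 6;
         IConst 11 2; IDiv 7 2 11; IAdd 7 7 16; IAdd 8 1 1; IAdd 23 1 1;
         IConst 11 2; IAdd 8 8 11; IConst 11 4; IAdd 14 11 3; IAdd 9 14 4;
         IAdd 24 6 6; IAdd 10 9 0; IAdd 15 9 24; IAdd 15 15 24;
 (* 24 *) ILt 20 10 15; IJz 20 29; IStore 10 8; IAdd 10 10 16; IJmp 24;
 (* 29 *) IConst 10 4; IAdd 15 9 0;
 (* 31 *) ILt 20 10 15; IJz 20 52; ILoad 11 10; IDiv 12 11 7;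
          ILt 13 10 14; ISub 13 16 13; IMul 13 13 6; IAdd 12 12 13; IAdd 12 12 9;
          ILoad 21 12; ISub 20 21 11; ISub 20 21 20; IStore 12 20; IAdd 12 12 24;
          ISub 13 1 11; ILoad 21 12; ISub 20 21 13; ISub 20 21 20; IStore 12 20;
          IAdd 10 10 16; IJmp 31;
 (* 52 *) IAdd 10 9 6; IAdd 11 9 24; IAdd 12 11 6; IAdd 13 11 24; IAdd 15 13 24;
          IMinConv 9 10 6 13; IMinConv 11 12 6 15;
          IAdd 10 13 0; ISub 15 15 16; IConst 22 0;
 (* 62 *) ILt 20 10 15; IJz 20 77; ILoad 11 10; ILt 20 11 8;
          IAdd 25 22 16; IStore 25 11; IAdd 13 10 24; ILoad 13 13; ISub 13 23 13;
          IAdd 25 25 16; IStore 25 13; IAdd 20 20 20; IAdd 22 22 20; IAdd 10 10 16;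
          IJmp 62;
 (* 77 *) IStore 0 22; IHalt].

Ltac word_bound :=
  match goal with
  | HL : is_true (regs_bounded ?W ?L) |- is_true (regfile ?L _ <= ?W) => exact: regfile_le HL
  | HM : mem_bounded ?W ?M |- is_true (?M _ <= ?W) => exact: (HM _)
  | HL : is_true (regs_bounded ?W ?L) |- is_true (regfile ?L _ - _ <= ?W) =>
      exact: leq_trans (leq_subr _ _) (regfile_le _ HL)
  | HL : is_true (regs_bounded ?W ?L) |- is_true (regfile ?L _ %/ _ <= ?W) =>
      exact: leq_trans (leq_div _ _) (regfile_le _ HL)
  | |- is_true (nat_of_bool _ <= ?W) => apply: leq_trans (leq_b1 _) _; lia
  | |- _ => cbn [regfile nth]; lia
  end.

(* After one step, record that the written word is bounded and evaluate the
   new register file and program counter. *)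
Ltac commit_step extra_bound :=
  match goal with
  | |- reaches ?W _ _ (St _ (upd (regfile ?L) ?r ?v) _) _ =>
      let Hv := fresh "Hv" in
      assert (Hv : v <= W) by first [word_bound | extra_bound];
      match goal with HL : is_true (regs_bounded _ _) |- _ =>
        let HL' := fresh "HL" in
        pose proof (@regs_bounded_set _ _ r _ HL Hv) as HL'; clear Hv HL; rename HL' into HL;
        rewrite upd_regfile; cbn [set_nth regfile nth] in HL |- * end
  | |- reaches ?W _ _ (St _ _ (upd ?M ?a ?v)) _ =>
      let Hv := fresh "Hv" in
      assert (Hv : v <= W) by first [word_bound | extra_bound];
      match goal with HM : mem_bounded _ M |- _ =>
        let HM' := fresh "HM" in
        pose proof (@mem_bounded_upd _ _ a _ HM Hv) as HM'; clear Hv HM; rename HM' into HM;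
        cbn [regfile nth] in HM |- * end
  | _ => cbn [regfile nth];
         match goal with |- reaches _ _ _ (St ?p _ _) _ =>
           let p' := eval simpl in p in change p with p' end
  end.

Ltac run_step_with extra_bound :=
  eapply reaches_step;
  [ apply: bounded_regfile; eassumption
  | cbv beta iota zeta delta [step approx_prog nth]; reflexivity
  | commit_step extra_bound ].
Tactic Notation "run_step" := run_step_with ltac:(idtac; fail).
Tactic Notation "run_step" "using" tactic(t) := run_step_with t.

(* Resolve the comparison stored in register [r] to the boolean [b]. *)
Ltac branch r b :=
  let c := match goal with |- reaches _ _ _ (St _ (regfile ?L) _) _ =>
      let e := eval cbn [nth] in (nth 0 L r) in
      match e with nat_of_bool ?c => constr:(c) end end in
  let E := fresh "E" in
  assert (E : c = b) by lia;
  match goal with H : is_true (regs_bounded _ _) |- _ =>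
    rewrite E in H *; clear E; cbn [nat_of_bool] in H |- * end.

Section Verification.
Variables (W : nat) (T : nat -> nat) (t D q h : nat) (A1 A2 : seq nat) (M0 : nat -> nat).
Local Notation n1 := (size A1).
Local Notation n2 := (size A2).
Local Notation nb := (q + q + (q + q)).
Local Notation B := (4 + n1 + n2).
Local Notation top := (t + t + 2).
Local Notation lo_addr := (B + (nb + nb) + (nb + nb)).
Local Notation hi_addr := (lo_addr + (nb + nb)).
Local Notation lo_min := (bucket_min h top id).
Local Notation hi_min := (bucket_min h top (fun a => t - a)).
Local Notation out_mem M2 m :=
  (out_seq t (fun k => M2 (lo_addr + k)) (fun k => M2 (hi_addr + k)) m).
Hypotheses (D_le_t : D <= t) (q_def : t %/ D = q) (q_gt0 : 0 < q) (q_le_t : q <= t)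
  (h_def : D %/ 2 + 1 = h) (h_gt0 : 0 < h) (W_ge : 64 * t.+1 <= W)
  (size_le : n1 + n2 <= 4 * q.+1).
Hypotheses (A1_le : all (fun a => a <= t) A1) (A2_le : all (fun a => a <= t) A2)
  (bucket_lt : forall a, a <= t -> a %/ h < nb).
Hypotheses (M0_t : M0 0 = t) (M0_D : M0 1 = D) (M0_n1 : M0 2 = n1) (M0_n2 : M0 3 = n2)
  (M0_input : forall j, j < n1 + n2 -> M0 (4 + j) = nth 0 (A1 ++ A2) j)
  (M0_bounded : mem_bounded W M0).

Definition regs_at x10 x11 x12 x13 x15 x20 x21 x22 x25 : seq nat :=
  [:: 0; t; D; n1; n2; q; nb; h; top; B; x10; x11; x12; x13; 4 + n1; x15; 1; 0; 0; 0;
      x20; x21; x22; t + t; nb + nb; x25].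

Definition fill_inv j s := exists x10 x11 x12 x13 x15 x20 x21 x22 x25 M,
  [/\ s = St 24 (regfile (regs_at x10 x11 x12 x13 x15 x20 x21 x22 x25)) M,
      regs_bounded W (regs_at x10 x11 x12 x13 x15 x20 x21 x22 x25), mem_bounded W M,
      x10 = B + j /\ x15 = lo_addr &
      forall x, M x = if (B <= x) && (x < B + j) then top else M0 x].

Lemma setup_spec : reaches W T approx_prog (St 0 (regfile (nseq 26 0)) M0)
  (fun c s => c = 24 /\ fill_inv 0 s).
Proof.
have HL : regs_bounded W (nseq 26 0) by [].
have HM := M0_bounded; rewrite [nseq _ _]/= in HL *.
do 7 run_step.
rewrite M0_t M0_D M0_n1 M0_n2 in HL *.
run_step; rewrite q_def in HL *.
do 5 run_step; rewrite h_def in HL *.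
do 11 run_step.
apply: reaches_now; split=> //.
do 10 eexists; split; [reflexivity | exact: HL | exact: HM | split; lia | ].
by move=> x; case: ifP => //; lia.
Qed.

Definition tables j M :=
  [/\ mem_table M B (lo_min (take j A1)) nb,
      mem_table M (B + nb) (lo_min (take (j - n1) A2)) nb,
      mem_table M (B + (nb + nb)) (hi_min (take j A1)) nb &
      mem_table M (B + (nb + nb) + nb) (hi_min (take (j - n1) A2)) nb].

Definition bucket_inv j s := exists x10 x11 x12 x13 x15 x20 x21 x22 x25 M,
  [/\ s = St 31 (regfile (regs_at x10 x11 x12 x13 x15 x20 x21 x22 x25)) M,
      regs_bounded W (regs_at x10 x11 x12 x13 x15 x20 x21 x22 x25), mem_bounded W M,
      x10 = 4 + j /\ x15 = B &
      (forall x, x < B -> M x = M0 x) /\ tables j M].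

Lemma fill_step_spec j s : j < nb + nb + (nb + nb) -> fill_inv j s ->
  reaches W T approx_prog s (fun c s' => c <= 5 /\ fill_inv j.+1 s').
Proof.
move=> Hj [x10 [x11 [x12 [x13 [x15 [x20 [x21 [x22 [x25 [M
   [-> HL HM [E10 E15] HMv]]]]]]]]]]]; subst x10 x15; rewrite /regs_at in HL *.
run_step; branch 20 true; do 4 run_step.
apply: reaches_now; split=> //.
do 10 eexists; split; [reflexivity | exact: HL | exact: HM | split; lia | ].
move=> x; rewrite /upd HMv; case: (eqVneq x (B + j)) => [->|ne].
- by rewrite (_ : B <= B + j < B + j.+1) //; apply/andP; split; lia.
- rewrite (_ : (B <= x < B + j.+1) = (B <= x < B + j)) //.
  by apply/idP/idP => /andP [h1 h2]; apply/andP; split; lia.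
Qed.

Lemma fill_exit_spec s : fill_inv (nb + nb + (nb + nb)) s ->
  reaches W T approx_prog s (fun c s' => c <= 4 /\ bucket_inv 0 s').
Proof.
move=> [x10 [x11 [x12 [x13 [x15 [x20 [x21 [x22 [x25 [M
   [-> HL HM [E10 E15] HMv]]]]]]]]]]]; subst x10 x15; rewrite /regs_at in HL *.
run_step; branch 20 false; do 3 run_step.
apply: reaches_now; split=> //.
do 10 eexists; split; [reflexivity | exact: HL | exact: HM | split; lia | split].
- by move=> x Hx; rewrite HMv (_ : B <= x = false) //; lia.
- by rewrite /tables take0 sub0n take0; split=> i Hi; rewrite HMv; case: ifP => //; lia.
Qed.

Lemma tables_step j M a i off x M1 :
  j < n1 + n2 -> a = nth 0 (A1 ++ A2) j -> a %/ h = i -> i < nb ->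
  (off = 0 /\ j < n1) \/ (off = nb /\ n1 <= j) -> tables j M ->
  x = i + off + B -> M1 = upd M x (M x - (M x - a)) ->
  tables j.+1 (upd M1 (x + (nb + nb)) (M1 (x + (nb + nb)) - (M1 (x + (nb + nb)) - (t - a)))).
Proof.
move=> Hj Ea Ei Hi Hoff [T1 T2 T3 T4] -> ->.
case: Hoff => [[-> Hj1]|[-> Hj1]].
- have Et : take j.+1 A1 = rcons (take j A1) a by rewrite Ea nth_cat Hj1 -take_nth.
  rewrite /tables Et (_ : j.+1 - n1 = j - n1); last lia.
  rewrite (_ : i + 0 + B = B + i); last lia.
  rewrite (_ : B + i + (nb + nb) = B + (nb + nb) + i); last lia.
  split.
  + apply: mem_table_upd_out; last lia.
    exact: (@mem_table_upd_bucket h top id).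
  + by do 2 (apply: mem_table_upd_out; last lia).
  + apply: (@mem_table_upd_bucket h top (fun a => t - a)) => //.
    by apply: mem_table_upd_out; last lia.
  + by do 2 (apply: mem_table_upd_out; last lia).
- have Et : take j.+1 A1 = take j A1 by rewrite !take_oversize //; lia.
  have Et2 : take (j.+1 - n1) A2 = rcons (take (j - n1) A2) a.
    by rewrite subSn // Ea nth_cat ltnNge Hj1 /= -take_nth //; lia.
  rewrite /tables Et Et2.
  rewrite (_ : i + nb + B = B + nb + i); last lia.
  rewrite (_ : B + nb + i + (nb + nb) = B + (nb + nb) + nb + i); last lia.
  split.
  + by do 2 (apply: mem_table_upd_out; last lia).
  + apply: mem_table_upd_out; last lia.
    exact: (@mem_table_upd_bucket h top id).
  + by do 2 (apply: mem_table_upd_out; last lia).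
  + apply: (@mem_table_upd_bucket h top (fun a => t - a)) => //.
    by apply: mem_table_upd_out; last lia.
Qed.

Definition convolutions (M2 : nat -> nat) :=
  is_minconv (lo_min A1) (lo_min A2) (fun k => M2 (lo_addr + k)) nb /\
  is_minconv (hi_min A1) (hi_min A2) (fun k => M2 (hi_addr + k)) nb.

Definition output_inv (M2 : nat -> nat) k s := exists x10 x11 x12 x13 x15 x20 x21 x22 x25 M,
  [/\ s = St 62 (regfile (regs_at x10 x11 x12 x13 x15 x20 x21 x22 x25)) M,
      regs_bounded W (regs_at x10 x11 x12 x13 x15 x20 x21 x22 x25), mem_bounded W M,
      [/\ x10 = lo_addr + k, x15 = hi_addr - 1 & x22 = size (out_mem M2 k)] &
      (forall x, lo_addr <= x -> M x = M2 x) /\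
      (forall m, m < size (out_mem M2 k) -> M m.+1 = nth 0 (out_mem M2 k) m)].

Lemma minconv_calls_spec s : bucket_inv (n1 + n2) s ->
  reaches W T approx_prog s (fun c s' => c <= 12 + (T nb + T nb) /\
     exists M2, convolutions M2 /\ output_inv M2 0 s').
Proof.
move=> [x10 [x11 [x12 [x13 [x15 [x20 [x21 [x22 [x25 [M
   [-> HL HM [E10 E15] [Hlo [T1 T2 T3 T4]]]]]]]]]]]]]; subst x10 x15; rewrite /regs_at in HL *.
rewrite (_ : n1 + n2 - n1 = n2) ?take_oversize ?leq_addr // in T1 T2 T3 T4; last lia.
run_step; branch 20 false; do 6 run_step.
set M1 := minconv_mem M B (B + nb) nb lo_addr.
have HM1 : mem_bounded W M1.
  apply: minconv_mem_bounded => // i j Hi Hj; rewrite T1 // T2 //.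
  by have := bucket_min_le_top h top id A1 i; have := bucket_min_le_top h top id A2 j; lia.
have M1_low x : x < lo_addr -> M1 x = M x by exact: minconv_mem_out.
run_step.
set M2 := minconv_mem M1 (B + (nb + nb)) (B + (nb + nb) + nb) nb hi_addr.
have HM2 : mem_bounded W M2.
  apply: minconv_mem_bounded => // i j Hi Hj; rewrite !M1_low; try lia.
  rewrite T3 // T4 //; have := bucket_min_le_top h top (fun a => t - a) A1 i.
  by have := bucket_min_le_top h top (fun a => t - a) A2 j; lia.
do 4 run_step.
apply: reaches_now; split; first by lia.
exists M2; split; first split.
- apply: (eq_is_minconv _ _ _ (@minconv_at_correct M B (B + nb) nb)) => [i Hi|j Hj|k Hk].
  + exact: T1.
  + exact: T2.
  + by rewrite /M2 minconv_mem_out /M1 ?minconv_mem_in ?addKn //; lia.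
- apply: (eq_is_minconv _ _ _
           (@minconv_at_correct M1 (B + (nb + nb)) (B + (nb + nb) + nb) nb)) => [i Hi|j Hj|k Hk].
  + by rewrite M1_low; [exact: T3 | lia].
  + by rewrite M1_low; [exact: T4 | lia].
  + by rewrite /M2 minconv_mem_in ?addKn //; lia.
- by do 10 eexists; split; [reflexivity | exact: HL | exact: HM2 | split; [lia | lia | by []] | ].
Qed.

Lemma bucket_step_spec j s : j < n1 + n2 -> bucket_inv j s ->
  reaches W T approx_prog s (fun c s' => c <= 21 /\ bucket_inv j.+1 s').
Proof.
move=> Hj [x10 [x11 [x12 [x13 [x15 [x20 [x21 [x22 [x25 [M
   [-> HL HM [E10 E15] [Hlo Htab]]]]]]]]]]]]; subst x10 x15; rewrite /regs_at in HL *.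
run_step; branch 20 true; do 2 run_step.
rewrite (Hlo (4 + j)) ?(M0_input Hj) in HL *; last lia.
set a := nth 0 (A1 ++ A2) j in HL *.
have Ea : a = nth 0 (A1 ++ A2) j by [].
have Hat : a <= t.
  have : a \in A1 ++ A2 by rewrite Ea mem_nth // size_cat.
  by rewrite mem_cat => /orP [/(allP A1_le)|/(allP A2_le)].
clearbody a.
run_step.
set i := a %/ h in HL *.
have Ei : a %/ h = i by [].
have Hi : i < nb by exact: bucket_lt.
clearbody i.
do 2 run_step.
run_step using (cbn [regfile nth];
  apply: leq_trans (leq_mul (leq_subr _ 1) (leqnn _)) _; lia).
set off := (1 - (4 + j < 4 + n1)) * nb in HL *.
have Hoff : (off = 0 /\ j < n1) \/ (off = nb /\ n1 <= j).
  by rewrite /off ltn_add2l; case: (ltnP j n1) => H; [left|right]; split=> //; lia.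
clearbody off.
do 3 run_step.
set cur := M (i + off + B) in HL *.
have Ecur : cur = M (i + off + B) by [].
clearbody cur.
do 6 run_step.
set cur2 := upd M (i + off + B) (cur - (cur - a)) (i + off + B + (nb + nb)) in HL *.
have Ecur2 : cur2 = upd M (i + off + B) (cur - (cur - a)) (i + off + B + (nb + nb)) by [].
clearbody cur2.
do 5 run_step.
apply: reaches_now; split=> //.
do 10 eexists; split; [reflexivity | exact: HL | exact: HM | split; lia | split].
- by move=> x Hx; rewrite !upd_neq ?Hlo //; apply/eqP; lia.
- by subst cur2 cur; exact: (tables_step Hj Ea Ei Hi Hoff Htab).
Qed.

Lemma out_seqS (lo hi : nat -> nat) k :
  out_seq t lo hi k.+1 = out_seq t lo hi k ++ out_pair t lo hi k.
Proof. by rewrite /out_seq -addn1 iotaD map_cat flatten_cat /= cats0. Qed.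

Lemma size_out_seq (lo hi : nat -> nat) k : size (out_seq t lo hi k) <= k + k.
Proof. by elim: k => [//|k IH]; rewrite out_seqS size_cat /out_pair; case: ifP => _ /=; lia. Qed.

Definition final_state (M2 : nat -> nat) s :=
  [/\ bounded W s, step T approx_prog s = None & output s = out_mem M2 (2 * nb).-1].

(* The loop body writes both candidates of bucket sum k unconditionally and
   advances the output size by 2 [lo k < top]. *)
Lemma output_mem_step M M2 k : k < (2 * nb).-1 ->
  (forall x, lo_addr <= x -> M x = M2 x) ->
  (forall m, m < size (out_mem M2 k) -> M m.+1 = nth 0 (out_mem M2 k) m) ->
  let cnt := size (out_mem M2 k) in
  let M' := upd (upd M (cnt + 1) (M2 (lo_addr + k))) (cnt + 1 + 1) (t + t - M2 (hi_addr + k)) in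
  (forall x, lo_addr <= x -> M' x = M2 x) /\
  (forall m, m < size (out_mem M2 k.+1) -> M' m.+1 = nth 0 (out_mem M2 k.+1) m).
Proof.
move=> Hk Hhi Hout cnt M'.
have Hcnt : cnt <= k + k by exact: size_out_seq.
split=> [x Hx|mm]; rewrite /M'; first by rewrite !upd_neq ?Hhi //; apply/eqP; lia.
rewrite out_seqS size_cat nth_cat -/cnt.
case: (ltnP mm cnt) => H1 Hmm; first by rewrite !upd_neq ?Hout //; apply/eqP; lia.
move: Hmm; rewrite /out_pair; case: ifP => _ /= Hmm; last lia.
have [->|->] : mm = cnt \/ mm = cnt + 1 by lia.
- by rewrite /upd; case: eqP => E1; [lia | case: eqP => E2; [rewrite subnn | lia]].
- by rewrite /upd; case: eqP => E1; [rewrite (_ : cnt + 1 - cnt = 1) //; lia | lia].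
Qed.

Lemma output_step_spec M2 k s : k < (2 * nb).-1 -> output_inv M2 k s ->
  reaches W T approx_prog s (fun c s' => c <= 15 /\ output_inv M2 k.+1 s').
Proof.
move=> Hk [x10 [x11 [x12 [x13 [x15 [x20 [x21 [x22 [x25 [M
   [-> HL HM [E10 E15 E22] [Hhi Hout]]]]]]]]]]]]; subst x10 x15 x22; rewrite /regs_at in HL *.
have Hcnt := size_out_seq (fun k => M2 (lo_addr + k)) (fun k => M2 (hi_addr + k)) k.
run_step; branch 20 true; do 2 run_step.
rewrite Hhi in HL *; last lia.
run_step.
set sb := (M2 (lo_addr + k) < top) in HL *.
do 4 run_step.
rewrite upd_neq in HL *; last by apply/eqP; lia.
rewrite (_ : lo_addr + k + (nb + nb) = hi_addr + k) in HL *; last lia.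
rewrite Hhi in HL *; last lia.
do 3 run_step.
run_step using (cbn [regfile nth];
  apply: leq_trans (leq_add (leq_b1 _) (leq_b1 _)) _; lia).
run_step using (cbn [regfile nth]; have := leq_b1 sb; lia).
do 2 run_step.
have [Hhi' Hout'] := output_mem_step Hk Hhi Hout.
apply: reaches_now; split=> //.
do 10 eexists; split; [reflexivity | exact: HL | exact: HM | split | by split].
- lia.
- by [].
- by rewrite out_seqS size_cat /out_pair /sb; case: ifP => /=; lia.
Qed.

Lemma output_exit_spec M2 s : output_inv M2 (2 * nb).-1 s ->
  reaches W T approx_prog s (fun c s' => c <= 3 /\ final_state M2 s').
Proof.
move=> [x10 [x11 [x12 [x13 [x15 [x20 [x21 [x22 [x25 [M
   [-> HL HM [E10 E15 E22] [Hhi Hout]]]]]]]]]]]]; subst x10 x15 x22; rewrite /regs_at in HL *.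
run_step; branch 20 false; do 2 run_step.
apply: reaches_now; split=> //.
split; [exact: bounded_regfile | by [] |].
apply: (@eq_from_nth _ 0); first by rewrite size_mkseq.
by move=> i; rewrite size_mkseq => Hi; rewrite nth_mkseq //= upd_neq // Hout.
Qed.

(* 284 q + 112 bounds the phase costs 24 + 5 (16 q) + 4 + 21 (n1 + n2) + 12
   + 15 (8 q - 1) + 3, using n1 + n2 <= 4 q + 4. *)
Lemma prog_spec : reaches W T approx_prog (St 0 (regfile (nseq 26 0)) M0)
  (fun c s => c <= 284 * q + 112 + (T nb + T nb) /\
     exists M2, convolutions M2 /\ final_state M2 s).
Proof.
apply: reaches_bind setup_spec _ => c1 s1 [-> H1].
apply: reaches_bind (reaches_iter fill_step_spec (leq0n _) H1) _ => c2 s2 [Hc2 H2].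
apply: reaches_bind (fill_exit_spec H2) _ => c3 s3 [Hc3 H3].
apply: reaches_bind (reaches_iter bucket_step_spec (leq0n _) H3) _ => c4 s4 [Hc4 H4].
apply: reaches_bind (minconv_calls_spec H4) _ => c5 s5 [Hc5 [M2 [HC H5]]].
apply: reaches_bind (reaches_iter (output_step_spec (M2 := M2)) (leq0n _) H5) _ => c6 s6 [Hc6 H6].
apply: reaches_weaken (output_exit_spec H6) _ => c7 s7 [Hc7 H7].
by split; [lia | exists M2].
Qed.

End Verification.

Lemma sparse_count D A m : sparse D A -> count (fun a => a < m * D.+1) A <= 2 * m.
Proof.
move=> Hs; elim: m => [|m IH]; first by rewrite (eq_count (a2 := pred0)) ?count_pred0.
set window := fun a => (m * D.+1 <= a) && (a <= m * D.+1 + D).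
apply: leq_trans (_ : count (predU (fun a => a < m * D.+1) window) A <= _).
  apply: sub_count => a /= Ha; apply/orP.
  case: (ltnP a (m * D.+1)) => H; [by left | right].
  by apply/andP; split=> //; move: Ha; rewrite mulSn; lia.
rewrite -(leq_add2r (count (predI (fun a => a < m * D.+1) window) A)) count_predUI.
by have := Hs (m * D.+1); rewrite /window; lia.
Qed.

Lemma sparse_size D A t : 0 < D -> sparse D A -> all (fun a => a <= t) A ->
  size A <= 2 * (t %/ D).+1.
Proof.
move=> HD Hs Ha; have Ht := ltn_ceil t HD.
rewrite -(@count_predT _ A) -(eq_in_count (a1 := fun a => a < (t %/ D).+1 * D.+1)).
  exact: sparse_count.
by move=> a /(allP Ha) /= Hat; move: Ht; rewrite mulnS; move: (t %/ D) => q; lia.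
Qed.

Lemma bucket_index_lt t D q h a : t < q.+1 * D -> D < h * 2 -> 0 < q -> a <= t ->
  a %/ h < q + q + (q + q).
Proof. by move=> Ht HD Hq Ha; rewrite ltn_divLR; nia. Qed.

Lemma approx_prog_correct W T t D A1 A2 :
  0 < D -> D <= t -> all (fun a => a <= t) A1 -> all (fun a => a <= t) A2 ->
  sparse D A1 -> sparse D A2 -> 64 * t.+1 <= W ->
  exists c s, [/\ exec W T approx_prog (init_state t D A1 A2) c s,
    c <= 284 * (t %/ D) + 112 + (T (4 * (t %/ D)) + T (4 * (t %/ D))) &
    approximates None D (output s) (sumset A1 A2)].
Proof.
move=> D_gt0 D_le_t A1_le A2_le A1_sp A2_sp W_ge.
have size1 := sparse_size D_gt0 A1_sp A1_le; have size2 := sparse_size D_gt0 A2_sp A2_le.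
have q_gt0 : 0 < t %/ D by rewrite divn_gt0.
have h_gt0 : 0 < D %/ 2 + 1 by rewrite addn1.
have bucket_lt a : a <= t -> a %/ (D %/ 2 + 1) < t %/ D + t %/ D + (t %/ D + t %/ D).
  apply: bucket_index_lt (ltn_ceil _ D_gt0) _ q_gt0.
  by rewrite addn1; exact: ltn_ceil.
set M0 := fun x => nth 0 ([:: t; D; size A1; size A2] ++ A1 ++ A2) x.
have M0_bounded : mem_bounded W M0.
  have le_W : subpred (fun y => y <= t) (fun y => y <= W) by move=> y /=; lia.
  have /allP all_W : all (fun y => y <= W) ([:: t; D; size A1; size A2] ++ A1 ++ A2).
    rewrite /= all_cat !(sub_all le_W) // !andbT.
    by have qt := leq_div t D; apply/and4P; split; lia.
  move=> x; case: (ltnP x (size ([:: t; D; size A1; size A2] ++ A1 ++ A2))) => Hx.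
  - exact/all_W/mem_nth.
  - by rewrite /M0 nth_default.
have [c [s [Hrun [Hc [M2 [[lo_ok hi_ok] [Hb Hhalt Hout]]]]]]] :=
  @prog_spec W T t D (t %/ D) (D %/ 2 + 1) A1 A2 M0 D_le_t erefl q_gt0 (leq_div t D)
    erefl h_gt0 W_ge ltac:(lia) A1_le A2_le bucket_lt
    erefl erefl erefl erefl (fun j _ => erefl) M0_bounded.
exists c, s; split.
- have -> : init_state t D A1 A2 = St 0 (regfile (nseq 26 0)) M0 by rewrite regfile_nseq0.
  exact: exec_of_runs Hrun Hb Hhalt.
- by move: Hc; rewrite (_ : ?[n] + ?n + (?n + ?n) = 4 * ?n) //; lia.
- rewrite Hout; apply: (out_seq_approximates (h := D %/ 2 + 1)) => //.
  by have := ltn_ceil D (isT : 0 < 2); rewrite addn1 /=; lia.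
Qed.

Theorem lemma4p10 (T : nat -> nat)
    (T_lin : exists c, forall n, n <= c * T n + c)
    (T_scale : forall c, exists d, forall n, T (c * n) <= d * T n + d) :
  exists (P : seq instr) (C : nat),
    forall (t D : nat) (A1 A2 : seq nat),
      0 < D -> D <= t ->
      sorted ltn A1 -> sorted ltn A2 ->
      all (fun a => a <= t) A1 -> all (fun a => a <= t) A2 ->
      sparse D A1 -> sparse D A2 ->
      exists (cost : nat) (s : state),
        [/\ exec (C * (t.+1) ^ C) T P (init_state t D A1 A2) cost s,
            cost <= C * T (t %/ D) + C &
            approximates None D (output s) (sumset A1 A2)].
Proof.
have [c0 Hc0] := T_lin; have [d Hd] := T_scale 4.
exists approx_prog, (284 * c0 + 2 * d + 200).
move=> t D A1 A2 D_gt0 D_le_t _ _ A1_le A2_le A1_sp A2_sp.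
set C := 284 * c0 + 2 * d + 200.
have W_ge : 64 * t.+1 <= C * t.+1 ^ C.
  apply: leq_mul; first by rewrite /C; lia.
  by rewrite -{1}(expn1 t.+1) leq_pexp2l // /C; lia.
have [c [s [Hexec Hc Happrox]]] := approx_prog_correct T D_gt0 D_le_t A1_le A2_le A1_sp A2_sp W_ge.
exists c, s; split=> //.
have := Hc0 (t %/ D); have := Hd (t %/ D); move: Hc; rewrite /C.
by move: (T (t %/ D)) (T (4 * (t %/ D))) (t %/ D) => X Y q; nia.
Qed.
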